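(* Let $G$ be a $P_5$-free graph. If $(a,b,c,d)$ is an induced path $P_4$ in $G$ (with edges $ab,bc,cd$), then neither $b$ nor $c$ belongs to any efficient dominating set of $G$.
   Context: All graphs are finite, undirected and simple. A vertex dominates itself and all its neighbors. A vertex set $D$ of $G$ is an efficient dominating set if every vertex of $G$ is dominated by exactly one vertex of $D$. $P_k$ denotes the chordless path on $k$ vertices; $P_5$-free means no induced subgraph isomorphic to $P_5$. *)

From mathcomp Require Import all_boot.
Set Implicit Arguments. Unset Strict Implicit. Unset Printing Implicit Defensive.

Definition simple_graph (T : finType) (e : rel T) : Prop :=
  symmetric e /\ irreflexive e.

Definition dominates (T : finType) (e : rel T) (d v : T) : bool :=
  (d == v) || e d v.

Definition efficient_dom (T : finType) (e : rel T) (D : {set T}) : Prop :=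
  forall v : T, #|[set d in D | dominates e d v]| = 1.

Definition induced_path (T : finType) (e : rel T) (p : seq T) : Prop :=
  uniq p /\
  forall i j, i < size p -> j < size p ->
    forall x0 : T, e (nth x0 p i) (nth x0 p j) = ((i.+1 == j) || (j.+1 == i)).

Definition Pk_free (T : finType) (e : rel T) (k : nat) : Prop :=
  ~ exists p : seq T, size p = k /\ induced_path e p.

From mathcomp Require Import all_boot zify.

Set Implicit Arguments.
Unset Strict Implicit.
Unset Printing Implicit Defensive.

(* If b lies in an efficient dominating set D, then the vertex of D dominating
   d is a neighbour x of d with no neighbour among a, b, c, since each of
   these is already dominated by b; then (a, b, c, d, x) is an induced P_5.
   The case of c follows by reversing the path. *)

Section InducedPaths.

Variables (T : finType) (e : rel T).

Lemma induced_path_rev (p : seq T) : induced_path e p -> induced_path e (rev p).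
Proof.
move=> [p_uniq p_adj]; split; first by rewrite rev_uniq.
move=> i j; rewrite size_rev => ip jp x0.
by rewrite !nth_rev // p_adj; lia.
Qed.

Hypotheses (e_sym : symmetric e) (e_irr : irreflexive e).

Lemma induced_path_rcons (p : seq T) (x : T) :
    induced_path e p -> x \notin p ->
    (forall i, i < size p -> e (nth x p i) x = (i.+1 == size p)) ->
  induced_path e (rcons p x).
Proof.
move=> [p_uniq p_adj] xNp x_adj; split; first by rewrite rcons_uniq xNp.
have nth_adj x0 i : i < size p -> e (nth x0 p i) x = (i.+1 == size p).
  by move=> ip; rewrite (set_nth_default x) // x_adj.
move=> i j; rewrite size_rcons !ltnS [i <= _]leq_eqVlt [j <= _]leq_eqVlt.
move=> /predU1P ip /predU1P jp x0.
rewrite !nth_rcons.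
case: ip => [-> | ip]; case: jp => [-> | jp].
- by rewrite ltnn eqxx e_irr (gtn_eqF (ltnSn _)).
- by rewrite ltnn eqxx jp e_sym nth_adj // (gtn_eqF (leqW jp)).
- by rewrite ltnn eqxx ip nth_adj // (gtn_eqF (leqW ip)) orbF.
- by rewrite ip jp p_adj.
Qed.

End InducedPaths.

Section EfficientDomination.

Variables (T : finType) (e : rel T) (D : {set T}).
Hypothesis D_eff : efficient_dom e D.

Lemma efficient_dom_exists (v : T) : exists2 x, x \in D & dominates e x v.
Proof.
have /eqP/cards1P [z Dv] := D_eff v.
have : z \in [set d in D | dominates e d v] by rewrite Dv set11.
by rewrite inE => /andP [zD zv]; exists z.
Qed.

Lemma efficient_dom_unique (x y v : T) :
  x \in D -> y \in D -> dominates e x v -> dominates e y v -> x = y.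
Proof.
move=> xD yD xv yv; have /eqP/cards1P [z Dv] := D_eff v.
have : x \in [set d in D | dominates e d v] by rewrite inE xD xv.
have : y \in [set d in D | dominates e d v] by rewrite inE yD yv.
by rewrite Dv !inE => /eqP -> /eqP ->.
Qed.

Lemma efficient_dom_undominated (x y v : T) :
  x \in D -> y \in D -> x != y -> dominates e y v -> ~~ dominates e x v.
Proof.
move=> xD yD xy yv; apply: contra xy => xv.
by rewrite (efficient_dom_unique xD yD xv yv).
Qed.

Hypotheses (e_sym : symmetric e) (e_irr : irreflexive e) (P5_free : Pk_free e 5).

Lemma induced_P4_second_notin (a b c d : T) :
  induced_path e [:: a; b; c; d] -> b \notin D.
Proof.
move=> P4; have [_ P4_adj] := P4; apply/negP => bD.
have e_ab : e a b := P4_adj 0 1 isT isT a.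
have e_bc : e b c := P4_adj 1 2 isT isT a.
have e_cd : e c d := P4_adj 2 3 isT isT a.
have /negbT bd_nadj : e b d = false := P4_adj 1 3 isT isT a.
have bd_neq : b != d.
  by have [+ _] := P4; rewrite /= !inE => /and4P [_ /norP []].
have [x xD xd] := efficient_dom_exists d.
have xb : x != b.
  by apply: contraNneq bd_nadj => xb; move: xd; rewrite xb /dominates (negbTE bd_neq).
have xNdom v : dominates e b v -> ~~ dominates e x v.
  exact: efficient_dom_undominated xD bD xb.
have /norP [xa xa_nadj] : ~~ dominates e x a by rewrite xNdom // /dominates e_sym e_ab orbT.
have /norP [_ xb_nadj] : ~~ dominates e x b by rewrite xNdom // /dominates eqxx.
have /norP [xc xc_nadj] : ~~ dominates e x c by rewrite xNdom // /dominates e_bc orbT.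
have xd_neq : x != d by apply: contraNneq xc_nadj => ->; rewrite e_sym.
have e_dx : e d x by rewrite e_sym; move: xd; rewrite /dominates (negbTE xd_neq).
apply: P5_free; exists [:: a; b; c; d; x]; split => //.
apply: (induced_path_rcons e_sym e_irr P4).
  by rewrite !inE !negb_or xa xb xc xd_neq.
by case=> [|[|[|[|]]]] //= _; rewrite e_sym; apply/negbTE.
Qed.

End EfficientDomination.

Theorem proposition1 (T : finType) (e : rel T) :
  simple_graph e -> Pk_free e 5 ->
  forall a b c d : T, induced_path e [:: a; b; c; d] ->
  forall D : {set T}, efficient_dom e D -> b \notin D /\ c \notin D.
Proof.
move=> [e_sym e_irr] P5_free a b c d P4 D D_eff; split.
  exact: induced_P4_second_notin P4.
exact: induced_P4_second_notin (induced_path_rev P4).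
Qed.
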